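(* Let $(X,\mathcal{F})$ be the game hypergraph constructed from a 3SAT formula $\varphi$ as described in the context, and consider the strict Avoider-Enforcer game on it in which Enforcer moves first. Consider the restricted game in which both players may only make moves respecting the following order within every box $i$: $a_i$ is claimed before both $x_i$ and $\overline{x_i}$, and $s_i$ is claimed after both $x_i$ and $\overline{x_i}$ (i.e. $x_i$ and $\overline{x_i}$ may only be claimed once $a_i$ is claimed, and $s_i$ only once $x_i$ and $\overline{x_i}$ are claimed). Then Avoider has a winning strategy in the restricted game if and only if she has a winning strategy in the unrestricted game; that is, the outcome of the game is unchanged.
   Context: A (strict) Avoider-Enforcer game is given by a finite board $X$ and a family $\mathcal{F}$ of losing sets; Avoider and Enforcer alternately claim one unclaimed element of $X$ per move until all of $X$ is claimed; Enforcer wins iff Avoider has claimed all elements of some $f\in\mathcal{F}$. Construction from a 3SAT formula $\varphi$ on variables $x_1,\dots,x_n$ (each clause having exactly three literals on three distinct variables): the board is $X=\bigcup_{i=1}^n\{a_i,s_i,x_i,\overline{x_i}\}$, consisting of $4n$ distinct vertices; the set $B_i=\{a_i,s_i,x_i,\overline{x_i}\}$ is called box $i$. The vertices $x_i,\overline{x_i}$ are identified with the literals $x_i,\overline{x_i}$ of $\varphi$. The family $\mathcal{F}$ consists of (1) for each $i$, all four 3-element subsets of $B_i$; and (2) for each clause $C=\ell_i\lor\ell_j\lor\ell_k$ of $\varphi$, where $\ell_h\in\{x_h,\overline{x_h}\}$ for $h=i,j,k$, the set $L_C=\{s_i,s_j,s_k,\overline{\ell_i},\overline{\ell_j},\overline{\ell_k}\}$,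 where $\overline{\ell}$ denotes the negation of literal $\ell$ (with $\overline{\overline{x_h}}=x_h$). *)

From mathcomp Require Import all_boot.
Set Implicit Arguments. Unset Strict Implicit. Unset Printing Implicit Defensive.

(** Board: vertex (i, k) of box i, with k = 0 : a_i, 1 : s_i, 2 : x_i, 3 : ~x_i. *)
Definition vertex (n : nat) : finType := ('I_n * 'I_4)%type.

Definition k_a : 'I_4 := @Ordinal 4 0 isT.
Definition k_s : 'I_4 := @Ordinal 4 1 isT.
Definition k_x : 'I_4 := @Ordinal 4 2 isT.
Definition k_nx : 'I_4 := @Ordinal 4 3 isT.

Definition va {n} (i : 'I_n) : vertex n := (i, k_a).
Definition vs {n} (i : 'I_n) : vertex n := (i, k_s).
Definition vx {n} (i : 'I_n) : vertex n := (i, k_x).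
Definition vnx {n} (i : 'I_n) : vertex n := (i, k_nx).

Definition box {n} (i : 'I_n) : {set vertex n} := [set va i; vs i; vx i; vnx i].

Definition literal (n : nat) := ('I_n * bool)%type.
Definition lit_vertex {n} (l : literal n) : vertex n :=
  if l.2 then vx l.1 else vnx l.1.
Definition neg_lit {n} (l : literal n) : literal n := (l.1, ~~ l.2).

Definition clause (n : nat) := (literal n * literal n * literal n)%type.
Definition wf_clause {n} (C : clause n) : bool :=
  let: (l1, l2, l3) := C in [&& l1.1 != l2.1, l1.1 != l3.1 & l2.1 != l3.1].

Definition clause_set {n} (C : clause n) : {set vertex n} :=
  let: (l1, l2, l3) := C in
  [set vs l1.1; vs l2.1; vs l3.1;
       lit_vertex (neg_lit l1); lit_vertex (neg_lit l2); lit_vertex (neg_lit l3)].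

Definition losing_family {n} (phi : seq (clause n)) : {set {set vertex n}} :=
  [set L : {set vertex n} | [exists i : 'I_n, (L \subset box i) && (#|L| == 3)]
           || has (fun C => L == clause_set C) phi].

(** Generic strict Avoider-Enforcer game on a finite board T with losing family F
    and a legality predicate [legal A E v] (may v be claimed when Avoider owns A
    and Enforcer owns E).  [awin A E b] : Avoider can force a win from the
    position (A, E), where b = true iff it is Avoider's turn.  This is the
    existence of a winning strategy for Avoider from that position. *)
Inductive awin (T : finType) (F : {set {set T}}) (legal : {set T} -> {set T} -> T -> bool)
  : {set T} -> {set T} -> bool -> Prop :=
| awin_end : forall A E b,
    A :|: E = [set: T] -> (forall L, L \in F -> ~~ (L \subset A)) -> awin F legal A E b
| awin_av : forall A E v,
    v \notin A :|: E -> legal A E v -> awin F legal (v |: A) E false -> awin F legal A E true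
| awin_en : forall A E,
    A :|: E != [set: T] ->
    (forall v, v \notin A :|: E -> legal A E v -> awin F legal A (v |: E) true) ->
    awin F legal A E false.

Definition unrestricted {n} (A E : {set vertex n}) (v : vertex n) : bool := true.

Definition restricted {n} (A E : {set vertex n}) (v : vertex n) : bool :=
  let i := v.1 in
  if v.2 == k_a then true
  else if v.2 == k_s then (vx i \in A :|: E) && (vnx i \in A :|: E)
  else va i \in A :|: E.

From mathcomp Require Import all_boot zify.
Set Implicit Arguments. Unset Strict Implicit. Unset Printing Implicit Defensive.

(* If phi has a satisfying assignment sg, Avoider wins both games by a pairing
   strategy: she answers a_i with the sg-true literal vertex of box i, s_i with
   the sg-false one, and vice versa.  She then owns at most one vertex of each
   pair, hence at most two per box, and never s_i together with the vertex of a
   false literal, i.e. never L_C for a clause C satisfied by sg.  Her answers are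
   legal in the restricted game, since Enforcer cannot take s_i before the
   false literal of box i has been claimed.

   If phi is unsatisfiable, Enforcer wins both games with restricted moves only.
   He opens a fresh box with a_i.  If Avoider answers outside the box he takes
   a third vertex of it; otherwise he takes the literal she did not take, and
   again takes a third vertex unless she completes the box with s_i and a
   literal.  Owning three vertices of a box forces Avoider, by counting, to own
   three vertices of some box; otherwise at the end Avoider owns s_i and one
   literal in every box, and this choice of literals falsifies some clause C,
   so that she owns L_C. *)

Ltac case_box S i :=
  case: (va i \in S); case: (vs i \in S); case: (vx i \in S); case: (vnx i \in S).

Section Board.
Variable n : nat.
Implicit Types (i j : 'I_n) (S L A E : {set vertex n}) (v w : vertex n).

Lemma vertex_eqE i j :
  ((va i == va j) = (i == j)) * ((vs i == vs j) = (i == j))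
  * ((vx i == vx j) = (i == j)) * ((vnx i == vnx j) = (i == j))
  * ((va i == vs j) = false) * ((va i == vx j) = false) * ((va i == vnx j) = false)
  * ((vs i == va j) = false) * ((vs i == vx j) = false) * ((vs i == vnx j) = false)
  * ((vx i == va j) = false) * ((vx i == vs j) = false) * ((vx i == vnx j) = false)
  * ((vnx i == va j) = false) * ((vnx i == vs j) = false) * ((vnx i == vx j) = false).
Proof. by rewrite /va /vs /vx /vnx !xpair_eqE !andbT !andbF. Qed.

Variant vertex_spec : vertex n -> Prop :=
  | VertexA i : vertex_spec (va i)
  | VertexS i : vertex_spec (vs i)
  | VertexX i : vertex_spec (vx i)
  | VertexNX i : vertex_spec (vnx i).

Lemma vertexP v : vertex_spec v.
Proof.
by case: v => i [[|[|[|[|k]]]] lt] //; rewrite (bool_irrelevance lt isT); constructor.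
Qed.

Lemma mem_box v i : (v \in box i) = (v.1 == i).
Proof. by case: v / vertexP => k; rewrite !inE !vertex_eqE ?orbF. Qed.

Definition nbox S i : nat := (va i \in S) + (vs i \in S) + (vx i \in S) + (vnx i \in S).

Lemma in_setU1_otherbox S v w : v.1 != w.1 -> (w \in v |: S) = (w \in S).
Proof. by move=> vw; rewrite in_setU1; case: eqP => // wv; rewrite wv eqxx in vw. Qed.

Lemma nbox_setU1_otherbox S v j : v.1 != j -> nbox (v |: S) j = nbox S j.
Proof. by move=> vj; rewrite /nbox !in_setU1_otherbox. Qed.

Lemma nbox_setU1 S v j : v \notin S -> nbox (v |: S) j = nbox S j + (v.1 == j).
Proof.
have [<- vS|vj _] := eqVneq v.1 j; last by rewrite nbox_setU1_otherbox ?addn0.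
by case: v / vertexP vS => k vS;
  rewrite /nbox !in_setU1 !vertex_eqE !eqxx (negPf vS) /=; lia.
Qed.

Lemma nbox_subset S L i : S \subset L -> nbox S i <= nbox L i.
Proof.
move/subsetP=> sub; have le w : (w \in S) <= (w \in L).
  by case: (boolP (w \in S)) => // /sub ->.
by rewrite /nbox !leq_add ?le.
Qed.

Lemma card_nbox S : #|S| = \sum_i nbox S i.
Proof.
rewrite -sum1_card big_mkcond /=.
pose F i k := if ((i, k) : vertex n) \in S then 1 else 0.
transitivity (\sum_(p : 'I_n * 'I_4) F p.1 p.2); first by apply: eq_bigr => -[].
rewrite -pair_bigA /=.
apply: eq_bigr => i _; rewrite !big_ord_recl big_ord0 /nbox addn0 !addnA.
have Fvert k w : w.1 = i -> val w.2 = val k -> F i k = (w \in S) :> nat.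
  by case: w => _ k' /= -> /val_inj ->; rewrite /F; case: (_ \in _).
by rewrite (Fvert _ (va i)) // (Fvert _ (vs i)) // (Fvert _ (vx i)) // (Fvert _ (vnx i)).
Qed.

Lemma card_sub_box L j : L \subset box j -> #|L| = nbox L j.
Proof.
move=> sub; rewrite card_nbox (bigD1 j) //= big1 ?addn0 // => k kj.
have out w : w.1 = k -> (w \in L) = false.
  by move=> wk; apply/negP => /(subsetP sub); rewrite mem_box wk (negPf kj).
by rewrite /nbox !out.
Qed.

Lemma nbox_full S i : nbox S i = 4 -> [&& va i \in S, vs i \in S, vx i \in S & vnx i \in S].
Proof. by rewrite /nbox; case_box S i. Qed.

Lemma nbox_notin S v : v \notin S -> nbox S v.1 < 4.
Proof. by case: v / vertexP => i; rewrite /nbox /=; case_box S i. Qed.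

Lemma nbox_setT S : (forall i, nbox S i = 4) -> S = [set: vertex n].
Proof.
move=> full; apply/setP => w; rewrite in_setT.
by move/and4P: (nbox_full (full w.1)); case: w / vertexP => /= i [].
Qed.

Lemma disjoint_setU1 A E v : v \notin E -> [disjoint A & E] -> [disjoint v |: A & E].
Proof. by move=> vE dAE; rewrite disjoints_subset subUset sub1set inE vE -disjoints_subset. Qed.

Lemma in_disjointF A E w : [disjoint A & E] -> (w \in A) && (w \in E) = false.
Proof. by move=> dAE; apply/andP => -[wA]; rewrite (disjointFr dAE wA). Qed.

Lemma nbox_setU A E i : [disjoint A & E] -> nbox (A :|: E) i = nbox A i + nbox E i.
Proof.
move=> dAE; move: (in_disjointF (va i) dAE) (in_disjointF (vs i) dAE).
move: (in_disjointF (vx i) dAE) (in_disjointF (vnx i) dAE).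
by rewrite /nbox !inE; case_box A i; case_box E i.
Qed.

Lemma nbox_pigeonhole A E i : (forall j, nbox A j + nbox E j = 4) -> #|E| <= #|A| + 1 ->
  3 <= nbox E i -> exists j, 3 <= nbox A j.
Proof.
move=> full le h3.
have [/existsP //|/existsPn small] := boolP [exists j, 3 <= nbox A j].
have sE : \sum_(j < n) (2 + (j == i)) <= #|E|.
  rewrite card_nbox; apply: leq_sum => j _; have := full j; have := small j.
  by rewrite -ltnNge; case: eqP => [->|_] /=; lia.
have sAE : #|A| + #|E| = n * 4.
  rewrite !card_nbox -big_split /= (eq_bigr (fun=> 4)) => [|j _]; last exact: full.
  by rewrite sum_nat_const card_ord.
have s1 : \sum_(j < n) (2 + (j == i)) = n * 2 + 1.
  rewrite big_split /= sum_nat_const card_ord (bigD1 i) //= eqxx big1 => [|j /negPf -> //].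
  by rewrite addn0.
lia.
Qed.

End Board.

Definition clause_sat n (f : 'I_n -> bool) (C : clause n) : bool :=
  let: (l1, l2, l3) := C in [|| f l1.1 == l1.2, f l2.1 == l2.2 | f l3.1 == l3.2].

Section LosingSets.
Variables (n : nat) (phi : seq (clause n)).
Implicit Types (j : 'I_n) (A L : {set vertex n}).

Lemma box_losing L j : L \subset box j -> nbox L j = 3 -> L \in losing_family phi.
Proof.
move=> sub L3; rewrite inE; apply/orP; left; apply/existsP; exists j.
by rewrite sub (card_sub_box sub) L3.
Qed.

Lemma losing_of_nbox3 A j : 3 <= nbox A j -> exists2 L, L \in losing_family phi & L \subset A.
Proof.
have inbox w : w.1 = j -> (w \in A :&: box j) = (w \in A).
  by move=> wj; rewrite inE mem_box wj eqxx andbT.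
case: (ltngtP (nbox A j) 3) => // [A4 | A3] _.
- have /and4P [aA sA xA _] : [&& va j \in A, vs j \in A, vx j \in A & vnx j \in A].
    by apply: nbox_full; apply/anti_leq; rewrite A4 andbT /nbox; case_box A j.
  exists [set va j; vs j; vx j].
    apply: (box_losing (j := j)); last by rewrite /nbox !inE !vertex_eqE ?eqxx.
    by apply/subsetP => w; rewrite !inE => /orP [/orP []|] /eqP ->; rewrite eqxx ?orbT.
  by apply/subsetP => w; rewrite !inE => /orP [/orP []|] /eqP ->.
- exists (A :&: box j); last exact: subsetIl.
  by apply: (box_losing (j := j)); rewrite ?subsetIr // /nbox !inbox.
Qed.

End LosingSets.

Section PairingStrategy.
Variables (n : nat) (phi : seq (clause n)).
Variable legal : {set vertex n} -> {set vertex n} -> vertex n -> bool.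
Variable sg : 'I_n -> bool.
Implicit Types (i : 'I_n) (A E L : {set vertex n}) (u v : vertex n).

Definition true_vertex i := if sg i then vx i else vnx i.
Definition false_vertex i := if sg i then vnx i else vx i.

Definition partner v : vertex n :=
  let i := v.1 in
  if v == va i then true_vertex i else if v == vs i then false_vertex i
  else if v == true_vertex i then va i else vs i.

Lemma partnerE i : [/\ partner (va i) = true_vertex i, partner (vs i) = false_vertex i,
  partner (true_vertex i) = va i & partner (false_vertex i) = vs i].
Proof.
rewrite /partner /true_vertex /false_vertex /=.
by case sgi: (sg i); rewrite /= ?sgi !vertex_eqE ?eqxx.
Qed.

Variant paired_vertex_spec : vertex n -> Prop :=
  | PairedA i : paired_vertex_spec (va i)
  | PairedS i : paired_vertex_spec (vs i)
  | PairedT i : paired_vertex_spec (true_vertex i)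
  | PairedF i : paired_vertex_spec (false_vertex i).

Lemma paired_vertexP v : paired_vertex_spec v.
Proof.
case: v / vertexP => i; [exact: PairedA | exact: PairedS | |];
  have := PairedT i; have := PairedF i; rewrite /true_vertex /false_vertex;
  by case: (sg i) => *.
Qed.

Lemma partnerK : involutive partner.
Proof.
move=> v; case: v / paired_vertexP => i; have [pa ps pt pf] := partnerE i.
- by rewrite pa pt.
- by rewrite ps pf.
- by rewrite pt pa.
- by rewrite pf ps.
Qed.

Lemma partner_neq v : partner v != v.
Proof.
case: v / paired_vertexP => i; have [pa ps pt pf] := partnerE i;
  rewrite ?pa ?ps ?pt ?pf /true_vertex /false_vertex;
  by case: (sg i); rewrite !vertex_eqE.
Qed.

Definition paired A E := [disjoint A & E] /\ forall u, (u \in A) = (partner u \in E).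

Lemma paired_partner_notin A E u : paired A E -> u \in A -> partner u \notin A.
Proof. by move=> [dAE hAE] uA; apply/negbT/(disjointFl dAE); rewrite -hAE. Qed.

Lemma paired_nbox A E i : paired A E -> nbox A i <= 2.
Proof.
move=> pAE; have excl u : ~~ [&& u \in A & partner u \in A].
  by apply/andP => -[/(paired_partner_notin pAE)/negPf ->].
have [pa ps _ _] := partnerE i; move: (excl (va i)) (excl (vs i)).
rewrite pa ps /nbox /true_vertex /false_vertex.
by case: (sg i); case_box A i.
Qed.

Lemma paired_clause_set A E C : paired A E -> clause_sat sg C -> ~~ (clause_set C \subset A).
Proof.
move=> pAE; case: C => [[l1 l2] l3] /= sat; apply/negP => /subsetP sub.
have unsat_lit l : sg l.1 == l.2 -> vs l.1 \in A -> lit_vertex (neg_lit l) \in A -> False.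
  case: l => j p /= /eqP <- sA; have [_ ps _ _] := partnerE j.
  have := paired_partner_notin pAE sA.
  by rewrite ps /lit_vertex /neg_lit /false_vertex /=; case: (sg j) => /negPf ->.
by case/or3P: sat => /unsat_lit; apply; apply: sub; rewrite !inE eqxx ?orbT.
Qed.

Hypothesis sg_sat : all (clause_sat sg) phi.

Lemma paired_no_losing A E L : paired A E -> L \in losing_family phi -> ~~ (L \subset A).
Proof.
move=> pAE; rewrite inE => /orP [/existsP [i /andP [sub /eqP L3]] | /hasP [C Cphi /eqP ->]].
- apply/negP => LA; have := leq_trans (nbox_subset i LA) (paired_nbox i pAE).
  by rewrite -(card_sub_box sub) L3.
- exact: paired_clause_set pAE (allP sg_sat C Cphi).
Qed.

Lemma paired_claim A E v : paired A E -> v \notin A :|: E ->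
  [/\ partner v \notin A :|: (v |: E), paired (partner v |: A) (v |: E)
    & #|~: (partner v |: A :|: (v |: E))| < #|~: (A :|: E)|].
Proof.
move=> [dAE hAE]; rewrite inE negb_or => /andP [vA vE].
have pA : partner v \notin A by rewrite hAE partnerK.
have pE : partner v \notin E by rewrite -hAE.
have pv := partner_neq v.
split.
- by rewrite !inE negb_or pA /= negb_or pv.
- split=> [|u].
    apply: disjoint_setU1; first by rewrite in_setU1 negb_or pv.
    by rewrite disjoint_sym disjoint_setU1 // disjoint_sym.
  by rewrite !in_setU1 hAE -[u == partner v](inj_eq (can_inj partnerK)) partnerK.
- apply: proper_card; apply/properP; split.
    by rewrite setCS; apply/subsetP => w; rewrite !inE => /orP [] ->; rewrite ?orbT.
  by exists v; rewrite !inE ?eqxx ?orbT // negb_or vA.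
Qed.

Hypothesis legal_partner : forall A E v, paired A E -> v \notin A :|: E -> legal A E v ->
  legal A (v |: E) (partner v).

Lemma paired_avoider_wins A E : paired A E -> awin (losing_family phi) legal A E false.
Proof.
have [m] := ubnP #|~: (A :|: E)|; elim: m A E => // m IH A E lt pAE.
have [full|nfull] := eqVneq (A :|: E) [set: vertex n].
  by apply: awin_end => // L /(paired_no_losing pAE).
apply: awin_en => // v vn lg.
have [pn pAE' lt'] := paired_claim pAE vn.
apply: awin_av pn (legal_partner pAE vn lg) _.
exact: IH _ _ (leq_trans lt' lt) pAE'.
Qed.

End PairingStrategy.

Section EnforcerStrategy.
Variables (n : nat) (phi : seq (clause n)).
Variable legal : {set vertex n} -> {set vertex n} -> vertex n -> bool.
Implicit Types (i j : 'I_n) (A E L : {set vertex n}) (v : vertex n).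

Definition fresh A E i := (nbox A i == 0) && (nbox E i == 0).
Definition settled A E i := [&& va i \in E, vs i \in A, nbox A i == 2 & nbox E i == 2].
Definition others_ok A E i := forall j, j != i -> fresh A E j || settled A E j.

Definition after_enforcer A E :=
  [\/ exists i, nbox E i = 2 /\ nbox A i = 0,
      exists i, [/\ va i \in E, nbox E i = 1, nbox A i = 0 & others_ok A E i] |
      exists i, [/\ va i \in E, vs i \notin E, nbox E i = 2, nbox A i = 1 & others_ok A E i]].

Definition after_avoider A E :=
  [\/ exists i, nbox E i = 2 /\ nbox A i + nbox E i < 4,
      exists i, nbox E i = 1 /\ nbox A i = 0,
      exists i, [/\ va i \in E, nbox E i = 1, nbox A i = 1 & others_ok A E i] |
      forall i, fresh A E i || settled A E i].

Definition enforcer_inv A E (b : bool) :=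
  [/\ [disjoint A & E], #|E| = #|A| + b &
      (exists i, 3 <= nbox E i) \/ if b then after_enforcer A E else after_avoider A E].

Lemma others_ok_setU1A A E i v : v.1 = i -> others_ok A E i -> others_ok (v |: A) E i.
Proof.
move=> vi ok j ji; have vj : v.1 != j by rewrite vi eq_sym.
by rewrite /fresh /settled nbox_setU1_otherbox // in_setU1_otherbox //; apply: ok.
Qed.

Lemma others_ok_setU1E A E i v : v.1 = i -> others_ok A E i -> others_ok A (v |: E) i.
Proof.
move=> vi ok j ji; have vj : v.1 != j by rewrite vi eq_sym.
by rewrite /fresh /settled nbox_setU1_otherbox // in_setU1_otherbox //; apply: ok.
Qed.

Lemma settled_reply A E i v : [disjoint A & E] -> va i \in E -> vs i \notin E ->
  nbox E i = 2 -> nbox A i = 1 -> v.1 = i -> v \notin A :|: E -> settled (v |: A) E i.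
Proof.
move=> dAE aE sE E2 A1 vi vn; subst i.
case: v / vertexP vn aE sE E2 A1 => k /=;
  move: (in_disjointF (va k) dAE) (in_disjointF (vs k) dAE);
  move: (in_disjointF (vx k) dAE) (in_disjointF (vnx k) dAE);
  rewrite /settled /nbox !inE !vertex_eqE ?eqxx /=;
  by case_box A k; case_box E k.
Qed.

Lemma settled_lit A E j : settled A E j -> [disjoint A & E] -> (vx j \in A) || (vnx j \in A).
Proof.
move=> + dAE; move: (in_disjointF (va j) dAE) (in_disjointF (vs j) dAE).
move: (in_disjointF (vx j) dAE) (in_disjointF (vnx j) dAE).
by rewrite /settled /nbox; case_box A j; case_box E j.
Qed.

Lemma settled_full A E j : settled A E j -> [disjoint A & E] -> nbox (A :|: E) j = 4.
Proof. by move=> /and4P [_ _ /eqP A2 /eqP E2] dAE; rewrite nbox_setU // A2 E2. Qed.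

Lemma enforcer_inv_avoider_move A E v : v \notin A :|: E -> enforcer_inv A E true ->
  enforcer_inv (v |: A) E false.
Proof.
move=> vn [dAE cardE st]; move: (vn); rewrite inE negb_or => /andP [vA vE].
have nboxA j : nbox (v |: A) j = nbox A j + (v.1 == j) by apply: nbox_setU1.
split; [by rewrite disjoint_setU1 | by rewrite cardsU1 vA cardE addn0 addnC |].
case: st => [threat|/= st]; [by left | right].
case: st => [[i [E2 A0]] | [i [aE E1 A0 ok]] | [i [aE sE E2 A1 ok]]].
- by constructor 1; exists i; rewrite nboxA E2 A0; case: (_ == _).
- have [vi|vi] := eqVneq v.1 i.
  + by constructor 3; exists i; rewrite nboxA A0 vi eqxx; split=> //; apply: others_ok_setU1A.
  + by constructor 2; exists i; rewrite nboxA A0 (negPf vi).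
- have [vi|vi] := eqVneq v.1 i.
  + constructor 4 => j; have [->|ji] := eqVneq j i; last exact: others_ok_setU1A vi ok j ji.
    by rewrite (settled_reply dAE aE sE E2 A1 vi vn) orbT.
  + by constructor 1; exists i; rewrite nboxA E2 A1 (negPf vi).
Qed.

Lemma enforcer_inv_claim A E v : [disjoint A & E] -> #|E| = #|A| -> v \notin A :|: E ->
  (exists i, 3 <= nbox (v |: E) i) \/ after_enforcer A (v |: E) ->
  enforcer_inv A (v |: E) true.
Proof.
move=> dAE cardE; rewrite inE negb_or => /andP [vA vE] st; split=> //.
- by rewrite disjoint_sym disjoint_setU1 // disjoint_sym.
- by rewrite cardsU1 vE cardE addnC.
Qed.

Hypothesis legal_a : forall A E i, legal A E (va i).
Hypothesis legal_lit : forall A E i, va i \in A :|: E -> legal A E (vx i) && legal A E (vnx i).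
Hypothesis legal_s : forall A E i, vx i \in A :|: E -> vnx i \in A :|: E -> legal A E (vs i).

Lemma exists_legal_in_box A E i : nbox (A :|: E) i < 4 ->
  exists v, [/\ v.1 = i, v \notin A :|: E & legal A E v].
Proof.
move=> lt4.
have [aAE|] := boolP (va i \in A :|: E); last by exists (va i).
have /andP [lx lnx] := legal_lit aAE.
have [xAE|] := boolP (vx i \in A :|: E); last by exists (vx i).
have [nxAE|] := boolP (vnx i \in A :|: E); last by exists (vnx i).
have [sAE|] := boolP (vs i \in A :|: E); last by exists (vs i); split=> //; apply: legal_s.
by move: lt4; rewrite /nbox aAE sAE xAE nxAE.
Qed.

Lemma reply_in_opened_box A E i : va i \in E -> nbox E i = 1 -> nbox A i = 1 ->
  others_ok A E i -> exists v, [/\ v \notin A :|: E, legal A E v & after_enforcer A (v |: E)].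
Proof.
move=> aE E1 A1 ok.
have /and3P [sE xE nxE] : [&& vs i \notin E, vx i \notin E & vnx i \notin E].
  by move: E1 aE; rewrite /nbox; case_box E i.
have /andP [lx lnx] : legal A E (vx i) && legal A E (vnx i).
  by apply: legal_lit; rewrite inE aE orbT.
have reply v : v.1 = i -> v != vs i -> v \notin E -> after_enforcer A (v |: E).
  move=> vi vs_v vE; constructor 3; exists i; split=> //; last exact: others_ok_setU1E.
  + by rewrite in_setU1 aE orbT.
  + by rewrite in_setU1 negb_or sE eq_sym vs_v.
  + by rewrite nbox_setU1 // E1 vi eqxx.
have [xA|xA] := boolP (vx i \in A).
- have nxA : vnx i \notin A by move: A1 xA; rewrite /nbox; case_box A i.
  exists (vnx i); split=> //; first by rewrite inE negb_or nxA.
  by apply: reply; rewrite ?vertex_eqE.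
- exists (vx i); split=> //; first by rewrite inE negb_or (negPf xA).
  by apply: reply; rewrite ?vertex_eqE.
Qed.

Lemma open_fresh_box A E : [disjoint A & E] -> A :|: E != [set: vertex n] ->
  (forall i, fresh A E i || settled A E i) ->
  exists v, [/\ v \notin A :|: E, legal A E v & after_enforcer A (v |: E)].
Proof.
move=> dAE nfull all_ok; have [i fresh_i | no_fresh] := pickP (fresh A E).
- have /andP [/eqP A0 /eqP E0] := fresh_i.
  have [aA aE] : va i \notin A /\ va i \notin E.
    by move: A0 E0; rewrite /nbox; case: (va i \in A); case: (va i \in E).
  exists (va i); split=> //; first by rewrite inE negb_or aA.
  constructor 2; exists i; split=> //.
  + by rewrite in_setU1 eqxx.
  + by rewrite nbox_setU1 // E0 eqxx.
  + by apply: others_ok_setU1E => // j _; apply: all_ok.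
- case/negP: nfull; apply/eqP/nbox_setT => j; apply: settled_full dAE.
  by have := all_ok j; rewrite no_fresh.
Qed.

Lemma enforcer_inv_enforcer_move A E : A :|: E != [set: vertex n] -> enforcer_inv A E false ->
  exists v, [/\ v \notin A :|: E, legal A E v & enforcer_inv A (v |: E) true].
Proof.
move=> nfull [dAE cardE st]; rewrite addn0 in cardE.
suff [v [vn lg st']] : exists v, [/\ v \notin A :|: E, legal A E v &
    (exists i, 3 <= nbox (v |: E) i) \/ after_enforcer A (v |: E)].
  by exists v; split=> //; apply: enforcer_inv_claim.
have claim_in i : nbox (A :|: E) i < 4 -> exists v,
    [/\ v \notin A :|: E, legal A E v & nbox (v |: E) i = (nbox E i).+1].
  case/exists_legal_in_box => v [vi vn lg]; exists v; split=> //.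
  by move: vn; rewrite inE negb_or => /andP [_ vE]; rewrite nbox_setU1 // vi eqxx addn1.
case: st => [[i E3] | /= [[i [E2 lt4]] | [i [E1 A0]] | [i [aE E1 A1 ok]] | all_ok]].
- have /subsetPn [u _ un] : ~~ ([set: vertex n] \subset A :|: E) by rewrite subTset.
  have [v [vn lg _]] := claim_in u.1 (nbox_notin un).
  exists v; split=> //; left; exists i; apply: leq_trans E3 (nbox_subset i _).
  exact: subsetUr.
- have [|v [vn lg Ev]] := claim_in i; first by rewrite nbox_setU.
  by exists v; split=> //; left; exists i; rewrite Ev E2.
- have [|v [vn lg Ev]] := claim_in i; first by rewrite nbox_setU // E1 A0.
  by exists v; split=> //; right; constructor 1; exists i; rewrite Ev E1.
- by have [v [vn lg st']] := reply_in_opened_box aE E1 A1 ok; exists v; split=> //; right.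
- by have [v [vn lg st']] := open_fresh_box dAE nfull all_ok; exists v; split=> //; right.
Qed.

Hypothesis unsat : ~~ [exists f : {ffun 'I_n -> bool}, all (clause_sat f) phi].

Lemma losing_of_settled A E : [disjoint A & E] -> (forall j, settled A E j) ->
  exists2 L, L \in losing_family phi & L \subset A.
Proof.
move=> dAE all_settled.
have sA j : vs j \in A by case/and4P: (all_settled j).
have litA l : (vx l.1 \in A) != l.2 -> lit_vertex (neg_lit l) \in A.
  case: l => j p; rewrite /lit_vertex /neg_lit /=.
  by have := settled_lit (all_settled j) dAE; case: p; case: (vx j \in A).
have /existsPn /(_ [ffun j => vx j \in A]) /allPn [[[l1 l2] l3] Cphi] := unsat.
rewrite /clause_sat !ffunE !negb_or => /and3P [n1 n2 n3].
exists (clause_set (l1, l2, l3)).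
  by rewrite inE; apply/orP; right; apply/hasP; exists (l1, l2, l3).
apply/subsetP => w; rewrite !inE.
by case/orP => [/orP [/orP [/orP [/orP []|]|]|]|] /eqP ->; rewrite ?sA ?litA.
Qed.

Lemma enforcer_inv_end A E b : A :|: E = [set: vertex n] -> enforcer_inv A E b ->
  exists2 L, L \in losing_family phi & L \subset A.
Proof.
move=> full [dAE cardE st].
have sum4 j : nbox A j + nbox E j = 4 by rewrite -nbox_setU // full /nbox !in_setT.
case: st => [[i E3] | st].
  have [|j A3] := nbox_pigeonhole sum4 _ E3; last exact: losing_of_nbox3 A3.
  by rewrite cardE leq_add2l; case: (b).
case: b {cardE} st => /= [[[i [E2 A0]] | [i [_ E1 A0 _]] | [i [_ _ E2 A1 _]]]
                          | [[i [E2 lt4]] | [i [E1 A0]] | [i [_ E1 A1 _]] | all_ok]];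
  try by have := sum4 i; lia.
apply: losing_of_settled dAE _ => j.
have /orP [/andP [/eqP A0 /eqP E0] | //] := all_ok j.
by have := sum4 j; rewrite A0 E0.
Qed.

Lemma enforcer_inv_no_awin A E b : awin (losing_family phi) legal A E b -> ~ enforcer_inv A E b.
Proof.
elim=> {A E b} [A E b full no_losing | A E v vn _ _ IH | A E nfull _ IH] inv.
- have [L LF LA] := enforcer_inv_end full inv.
  by move: (no_losing L LF); rewrite LA.
- exact/IH/enforcer_inv_avoider_move.
- have [v [vn lg inv']] := enforcer_inv_enforcer_move nfull inv.
  exact: IH v vn lg inv'.
Qed.

End EnforcerStrategy.

Section RestrictedGame.
Variable n : nat.
Implicit Types (i : 'I_n) (A E : {set vertex n}) (v : vertex n).

Lemma restricted_a A E i : restricted A E (va i).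
Proof. by []. Qed.

Lemma restricted_lit A E i : va i \in A :|: E -> restricted A E (vx i) && restricted A E (vnx i).
Proof. by rewrite /restricted /= => ->. Qed.

Lemma restricted_s A E i : vx i \in A :|: E -> vnx i \in A :|: E -> restricted A E (vs i).
Proof. by rewrite /restricted /= => -> ->. Qed.

Lemma restricted_partner (sg : 'I_n -> bool) A E v : paired sg A E -> v \notin A :|: E ->
  restricted A E v -> restricted A (v |: E) (partner sg v).
Proof.
move=> [_ hAE] vn; have grow w : w \in A :|: E -> w \in A :|: (v |: E).
  by rewrite !inE => /orP [] ->; rewrite ?orbT.
case: v / (paired_vertexP sg) vn grow => i vn grow; have [pa ps pt pf] := partnerE sg i.
- rewrite pa => _; have aAE : va i \in A :|: (va i |: E) by rewrite !inE eqxx orbT.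
  by have /andP [] := restricted_lit aAE; rewrite /true_vertex; case: (sg i).
- rewrite /restricted /= => /andP [xAE nxAE].
  have : false_vertex sg i \in A :|: E by rewrite /false_vertex; case: (sg i).
  move: vn; rewrite !inE negb_or => /andP [sA sE] /orP [fA | fE].
  + by move: fA; rewrite hAE pf (negPf sE).
  + by move: sA; rewrite hAE ps fE.
- by rewrite pt.
- rewrite pf => lg.
  have aAE : va i \in A :|: E by move: lg; rewrite /restricted /false_vertex; case: (sg i).
  have tAE : true_vertex sg i \in A :|: E.
    move: aAE; rewrite !inE (hAE (va i)) (hAE (true_vertex sg i)) pa pt.
    by case/orP=> ->; rewrite ?orbT.
  have fAE : false_vertex sg i \in A :|: (false_vertex sg i |: E) by rewrite !inE eqxx orbT.
  have := grow _ tAE; move: fAE; rewrite /true_vertex /false_vertex.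
  by case: (sg i) => ? ?; apply: restricted_s.
Qed.
End RestrictedGame.

Theorem lemma4 (n : nat) (phi : seq (clause n)) (Hphi : all wf_clause phi) :
  awin (losing_family phi) (@restricted n) set0 set0 false <->
  awin (losing_family phi) (@unrestricted n) set0 set0 false.
Proof.
have disj0 : [disjoint (set0 : {set vertex n}) & (set0 : {set vertex n})].
  by rewrite disjoints_subset sub0set.
have [/existsP [f sat] | unsat] := boolP [exists f : {ffun 'I_n -> bool}, all (clause_sat f) phi].
- have start : paired f set0 set0 by split=> // u; rewrite !inE.
  by split=> _; apply: paired_avoider_wins start => //; apply: restricted_partner.
- have start : enforcer_inv (set0 : {set vertex n}) set0 false.
    by split=> //; [rewrite cards0 | right; constructor 4 => i; rewrite /fresh /nbox !inE].
  split=> win; exfalso; move: start.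
  + exact: (enforcer_inv_no_awin (@restricted_a n) (@restricted_lit n) (@restricted_s n) unsat win).
  + by apply: (enforcer_inv_no_awin _ _ _ unsat win).
Qed.
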